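(* Let $S=[S_1,\ldots,S_m]$ and $R=[R_1,\ldots,R_m]$ be two sequences of propositional formulae of the same length over the alphabet $X$. The lexicographic orders $S$ and $R$ are equivalent if and only if the formula $DIFF(S,R)$ is unsatisfiable.
   Context: Models are truth assignments. For a formula $F$: $I \leq_F J$ iff $I \models F$ or $J \not\models F$. For a sequence $S=[S_1,\ldots,S_m]$: $I \leq_S J$ iff either $S=[]$, or ($I \leq_{S_1} J$ and (either $J \not\leq_{S_1} I$ or $I \leq_{S'} J$)), where $S'=[S_2,\ldots,S_m]$. Two sequences are equivalent if their orders coincide on all pairs of models over $X$. Let $X=\{x_1,\ldots,x_n\}$ and let $Y=\{y_1,\ldots,y_n\}$, $Z=\{z_1,\ldots,z_n\}$ be disjoint sets of fresh variables; $F[Y/X]$ denotes $F$ with each $x_i$ replaced by $y_i$, and $F[Z/X]$ likewise with $z_i$. Define $STRICT(G) = G[Y/X] \wedge \neg G[Z/X]$ and $EQUIV(G) = (G[Y/X] \equiv G[Z/X])$. For fresh variables $m_1,\ldots,m_m,e_1,\ldots,e_m$, define $ORDER(M,E)$ as $O_1$ where $O_{m+1}=\top$ and $O_k = m_k \vee (e_k \wedge O_{k+1})$, i.e. $ORDER(M,E)= m_1 \vee (e_1 \wedge (m_2 \vee (e_2 \wedge \cdots)))$; similarly $ORDER(N,F)$ with fresh variables $n_1,\ldots,n_m,f_1,\ldots,f_m$. With further fresh variables $a,b$, $DIFF(S,R)$ is the conjunction of: $m_i \equiv STRICT(S_i)$ and $e_i \equiv EQUIV(S_i)$ for $i=1,\ldots,m$;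 $a \equiv ORDER(M,E)$; $n_i \equiv STRICT(R_i)$ and $f_i \equiv EQUIV(R_i)$ for $i=1,\ldots,m$; $b\equiv ORDER(N,F)$; and $a \not\equiv b$. *)

From mathcomp Require Import all_boot.
Set Implicit Arguments. Unset Strict Implicit. Unset Printing Implicit Defensive.

Inductive form (V : Type) : Type :=
| FVar of V
| FTop
| FBot
| FNot of form V
| FAnd of form V & form V
| FOr of form V & form V
| FImp of form V & form V
| FIff of form V & form V.
Arguments FTop {V}. Arguments FBot {V}.

Fixpoint eval (V : Type) (I : V -> bool) (F : form V) : bool :=
  match F with
  | FVar x => I x
  | FTop => true
  | FBot => false
  | FNot G => ~~ eval I G
  | FAnd G H => eval I G && eval I H
  | FOr G H => eval I G || eval I H
  | FImp G H => eval I G ==> eval I H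
  | FIff G H => eval I G == eval I H
  end.

Definition models (V : Type) (I : V -> bool) (F : form V) : Prop := eval I F.

Fixpoint rename (V W : Type) (s : V -> W) (F : form V) : form W :=
  match F with
  | FVar x => FVar (s x)
  | FTop => FTop
  | FBot => FBot
  | FNot G => FNot (rename s G)
  | FAnd G H => FAnd (rename s G) (rename s H)
  | FOr G H => FOr (rename s G) (rename s H)
  | FImp G H => FImp (rename s G) (rename s H)
  | FIff G H => FIff (rename s G) (rename s H)
  end.

(* The alphabet X = {x_1..x_n} is 'I_n; models over X are 'I_n -> bool. *)
Definition model (n : nat) := 'I_n -> bool.

Definition leF (n : nat) (F : form 'I_n) (I J : model n) : Prop :=
  models I F \/ ~ models J F.

Fixpoint leS (n : nat) (S : seq (form 'I_n)) (I J : model n) : Prop :=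
  match S with
  | [::] => True
  | S1 :: S' => leF S1 I J /\ (~ leF S1 J I \/ leS S' I J)
  end.

Definition equiv_seq (n : nat) (S R : seq (form 'I_n)) : Prop :=
  forall I J : model n, leS S I J <-> leS R I J.

(* Variables of the DIFF formula: x_i, y_i, z_i (i < n), m_k, e_k, n_k, f_k
   (k < m), a, b -- all pairwise distinct (fresh). Indices are 0-based. *)
Inductive dvar : Type :=
| VX of nat | VY of nat | VZ of nat
| VM of nat | VE of nat | VN of nat | VF of nat
| VA | VB.

Definition substY (n : nat) (G : form 'I_n) : form dvar :=
  rename (fun i : 'I_n => VY (nat_of_ord i)) G.
Definition substZ (n : nat) (G : form 'I_n) : form dvar :=
  rename (fun i : 'I_n => VZ (nat_of_ord i)) G.

Definition STRICT (n : nat) (G : form 'I_n) : form dvar :=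
  FAnd (substY G) (FNot (substZ G)).
Definition EQUIV (n : nat) (G : form 'I_n) : form dvar :=
  FIff (substY G) (substZ G).

(* order_from mv ev k c = O_k for a sequence whose last index is k + c - 1:
   O = mv k \/ (ev k /\ O_{k+1}),  empty tail = top. *)
Fixpoint order_from (mv ev : nat -> dvar) (k c : nat) : form dvar :=
  match c with
  | 0 => FTop
  | c'.+1 => FOr (FVar (mv k)) (FAnd (FVar (ev k)) (order_from mv ev k.+1 c'))
  end.

(* ORDER(M,E) for m indices (O_1 in the paper's 1-based numbering). *)
Definition ORDER (mv ev : nat -> dvar) (m : nat) : form dvar :=
  order_from mv ev 0 m.

Definition bigAnd (fs : seq (form dvar)) : form dvar := foldr (@FAnd dvar) FTop fs.

Definition DIFF (n : nat) (S R : seq (form 'I_n)) : form dvar :=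
  let m := size S in
  bigAnd (
    [seq FIff (FVar (VM i)) (STRICT (nth FTop S i)) | i <- iota 0 m] ++
    [seq FIff (FVar (VE i)) (EQUIV (nth FTop S i)) | i <- iota 0 m] ++
    [:: FIff (FVar VA) (ORDER VM VE m)] ++
    [seq FIff (FVar (VN i)) (STRICT (nth FTop R i)) | i <- iota 0 m] ++
    [seq FIff (FVar (VF i)) (EQUIV (nth FTop R i)) | i <- iota 0 m] ++
    [:: FIff (FVar VB) (ORDER VN VF m);
        FNot (FIff (FVar VA) (FVar VB))]).

Definition satisfiable (V : Type) (F : form V) : Prop :=
  exists I : V -> bool, models I F.

(** In a model of DIFF the flags [m_i] and [e_i] are forced to say whether
    [S_i] holds strictly, resp. equivalently, between the two models read off
    the [y]- and [z]-variables, so [ORDER(M,E)], hence [a], says whether these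
    models are [<=_S]-related; likewise [b] for [R].  Thus DIFF is satisfiable
    exactly when some pair of models is ordered differently by [S] and [R]. *)
From mathcomp Require Import all_boot.
Set Implicit Arguments. Unset Strict Implicit. Unset Printing Implicit Defensive.

Lemma eval_rename (V W : Type) (s : V -> W) (I : W -> bool) (F : form V) :
  eval I (rename s F) = eval (I \o s) F.
Proof. by elim: F => //= [G -> | G -> H -> | G -> H -> | G -> H -> | G -> H ->]. Qed.

Lemma eq_eval (V : Type) (I I' : V -> bool) : I =1 I' -> eval I =1 eval I'.
Proof.
by move=> eqI; elim=> //= [G -> | G -> H -> | G -> H -> | G -> H -> | G -> H ->].
Qed.

Lemma eval_bigAnd (I : dvar -> bool) (fs : seq (form dvar)) :
  eval I (bigAnd fs) = all (eval I) fs.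
Proof. by elim: fs => //= f fs ->. Qed.

Lemma all_iff_defsP (I : dvar -> bool) (v : nat -> dvar) (f : nat -> form dvar) m :
  reflect (forall i, i < m -> I (v i) = eval I (f i))
          (all (eval I) [seq FIff (FVar (v i)) (f i) | i <- iota 0 m]).
Proof.
rewrite all_map; apply: (iffP allP) => [defs i lt_im | defs i].
  by apply/eqP; apply: defs; rewrite mem_iota.
by rewrite mem_iota /= => lt_im; apply/eqP/defs.
Qed.

Section LexOrder.

Variable n : nat.
Implicit Types (G : form 'I_n) (S T : seq (form 'I_n)) (I J : model n).

Definition strictb G I J := eval I G && ~~ eval J G.
Definition equivb G I J := eval I G == eval J G.

Fixpoint leSb S I J : bool :=
  if S is G :: S' then strictb G I J || equivb G I J && leSb S' I J else true.

Lemma leFP G I J : reflect (leF G I J) (eval I G || ~~ eval J G).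
Proof. exact: orPP idP negP. Qed.

Lemma leSP S I J : reflect (leS S I J) (leSb S I J).
Proof.
elim: S => [|G S IH] /=; first exact: ReflectT.
have -> : strictb G I J || equivb G I J && leSb S I J
        = (eval I G || ~~ eval J G) && (~~ (eval J G || ~~ eval I G) || leSb S I J).
  by rewrite /strictb /equivb; case: (eval I G); case: (eval J G).
exact: andPP (leFP G I J) (orPP (negPP (leFP G J I)) IH).
Qed.

Lemma equiv_seqP S T : equiv_seq S T <-> forall I J, leSb S I J = leSb T I J.
Proof.
split=> [eqST I J | eqST I J].
  by apply/idP/idP => /leSP/(eqST I J)/leSP.
by split=> /leSP le_IJ; apply/leSP; rewrite ?eqST // -eqST.
Qed.

Lemma eq_leSb S I I' J J' : I =1 I' -> J =1 J' -> leSb S I J = leSb S I' J'.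
Proof.
move=> eqI eqJ; elim: S => //= G S ->.
by rewrite /strictb /equivb (eq_eval eqI) (eq_eval eqJ).
Qed.

End LexOrder.

Section DiffEncoding.

Variable n : nat.
Implicit Types (A : dvar -> bool) (G : form 'I_n) (S R T : seq (form 'I_n)).

Definition ymodel A : model n := fun i => A (VY i).
Definition zmodel A : model n := fun i => A (VZ i).

Lemma eval_STRICT A G : eval A (STRICT G) = strictb G (ymodel A) (zmodel A).
Proof. by rewrite /= !eval_rename. Qed.

Lemma eval_EQUIV A G : eval A (EQUIV G) = equivb G (ymodel A) (zmodel A).
Proof. by rewrite /= !eval_rename. Qed.

Lemma eval_order_from A (mv ev : nat -> dvar) T k :
  (forall i, i < size T -> A (mv (k + i)) = eval A (STRICT (nth FTop T i))) ->
  (forall i, i < size T -> A (ev (k + i)) = eval A (EQUIV (nth FTop T i))) ->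
  eval A (order_from mv ev k (size T)) = leSb T (ymodel A) (zmodel A).
Proof.
elim: T k => //= G T IH k defM defE.
rewrite -[k]addn0 defM // defE // -eval_STRICT -eval_EQUIV addn0.
by rewrite IH // => i lt_iT; rewrite addSnnS; [apply: defM | apply: defE].
Qed.

Lemma eval_ORDER A (mv ev : nat -> dvar) T :
  (forall i, i < size T -> A (mv i) = eval A (STRICT (nth FTop T i))) ->
  (forall i, i < size T -> A (ev i) = eval A (EQUIV (nth FTop T i))) ->
  eval A (ORDER mv ev (size T)) = leSb T (ymodel A) (zmodel A).
Proof.
by move=> defM defE; apply: eval_order_from => i; rewrite add0n; [apply: defM | apply: defE].
Qed.

Lemma DIFF_sound A S R : size S = size R -> eval A (DIFF S R) ->
  leSb S (ymodel A) (zmodel A) != leSb R (ymodel A) (zmodel A).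
Proof.
move=> eq_size; rewrite /DIFF eval_bigAnd !all_cat /=.
case/and5P=> /all_iff_defsP defM /all_iff_defsP defE /andP[/eqP defA _].
move=> /all_iff_defsP defN /and4P[/all_iff_defsP defF /eqP defB neqAB _].
rewrite eq_size in defN defF defB.
by rewrite -(eval_ORDER defM defE) -(eval_ORDER defN defF) -defA -defB.
Qed.

(* The variables [x_i], and [y_k], [z_k] for [k >= n], do not occur in DIFF. *)
Definition diff_assignment S R (I J : model n) (v : dvar) : bool :=
  match v with
  | VX _ => false
  | VY k => if insub k is Some i then I i else false
  | VZ k => if insub k is Some i then J i else false
  | VM k => strictb (nth FTop S k) I J
  | VE k => equivb (nth FTop S k) I J
  | VN k => strictb (nth FTop R k) I J
  | VF k => equivb (nth FTop R k) I J
  | VA => leSb S I J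
  | VB => leSb R I J
  end.

Lemma DIFF_complete S R (I J : model n) : size S = size R ->
  leSb S I J != leSb R I J -> eval (diff_assignment S R I J) (DIFF S R).
Proof.
move=> eq_size neqSR; set A := diff_assignment S R I J.
have eqY : ymodel A =1 I by move=> i; rewrite /ymodel /A /= valK.
have eqZ : zmodel A =1 J by move=> i; rewrite /zmodel /A /= valK.
have evalY := eq_eval eqY; have evalZ := eq_eval eqZ.
have defM G : eval A (STRICT G) = strictb G I J.
  by rewrite eval_STRICT /strictb evalY evalZ.
have defE G : eval A (EQUIV G) = equivb G I J.
  by rewrite eval_EQUIV /equivb evalY evalZ.
have ordS : eval A (ORDER VM VE (size S)) = leSb S I J.
  by rewrite eval_ORDER ?(eq_leSb S eqY eqZ) // => i _; rewrite ?defM ?defE.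
have ordR : eval A (ORDER VN VF (size S)) = leSb R I J.
  by rewrite eq_size eval_ORDER ?(eq_leSb R eqY eqZ) // => i _; rewrite ?defM ?defE.
rewrite /DIFF eval_bigAnd !all_cat /= ordS ordR.
rewrite !(introT (all_iff_defsP _ _ _ _)) => [|k _|k _|k _|k _]; rewrite ?defM ?defE //.
by rewrite !eqxx neqSR.
Qed.

End DiffEncoding.

Theorem theorem9 (n : nat) (S R : seq (form 'I_n)) :
  size S = size R ->
  (equiv_seq S R <-> ~ satisfiable (DIFF S R)).
Proof.
move=> eq_size; split.
  move=> /equiv_seqP eqSR [A /(DIFF_sound eq_size)].
  by rewrite eqSR eqxx.
move=> unsat; apply/equiv_seqP => I J; apply/eqP/contraT => neqSR.
by case: unsat; exists (diff_assignment S R I J); apply: DIFF_complete.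
Qed.
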